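(* Let $V:\mathbb{C}^2\to\mathcal{H}_j$ be the encoding isometry of a spin code which is $\mathsf{X}$-covariant, i.e. $D^j(\mathsf{X})V=V\mathsf{X}$, and suppose the codewords $|\bar0\rangle=V|0\rangle$, $|\bar1\rangle=V|1\rangle$ are real (real coefficients in the basis $|j,m\rangle$). Then for all $0\le k\le 2j$, $-k\le q\le k$: $\langle\bar0|T^k_q|\bar0\rangle=(-1)^{q+k}\langle\bar1|T^k_q|\bar1\rangle$, $\langle\bar0|T^k_q|\bar1\rangle=(-1)^{q+k}\langle\bar0|T^k_q|\bar1\rangle$, and $\langle\bar1|T^k_q|\bar0\rangle=(-1)^{q+k}\langle\bar1|T^k_q|\bar0\rangle$.
   Context: $\mathcal{H}_j$ is the spin-$j$ irrep of $\mathrm{SU}(2)$ with orthonormal basis $|j,m\rangle$, $|m|\le j$ ($J_z$-eigenbasis), $D^j(g)$ the action of $g\in\mathrm{SU}(2)$, and $\mathsf{X}=\begin{pmatrix}0&-i\\-i&0\end{pmatrix}$. Spherical tensors: $T^k_q=\sqrt{\tfrac{2k+1}{2j+1}}\sum_m C^{j\,m+q}_{k\,q,\,j\,m}|j,m+q\rangle\langle j,m|$ with Clebsch–Gordan coefficients $C$. *)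

(* Complex numbers: an arbitrary numClosedFieldType C
   (e.g. algC, or complex R for a real closed field R). *)
From HB Require Import structures.
From mathcomp Require Import all_boot all_order all_algebra.
Set Implicit Arguments. Unset Strict Implicit. Unset Printing Implicit Defensive.
Import Order.TTheory GRing.Theory Num.Theory.
Local Open Scope ring_scope.

Section Spin.
Variable C : numClosedFieldType.

(* Conventions: d = 2j (nat).  H_j = C^(d+1); basis vector with index
   i : 'I_(d.+1) is |j, m> with m = i - j  (i.e. i = j + m). *)

(* D^j(g): the spin-j representation realised on homogeneous polynomials of
   degree 2j in (x,y), x = |up>, y = |down>, |j,m> = x^(j+m) y^(j-m)/sqrt((j+m)!(j-m)!),
   g acting by x |-> a x + c y, y |-> b x + e y where g = [[a,b],[c,e]].
   Entry (r, c0) = <j, r-j | D^j(g) | j, c0-j>. *)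
Definition Dj (d : nat) (g : 'M[C]_2) : 'M[C]_(d.+1) :=
  let a := g ord0 ord0 in let b := g ord0 ord_max in
  let c := g ord_max ord0 in let e := g ord_max ord_max in
  \matrix_(r, c0)
    (sqrtC (((r`! * (d - r)`!)%:R) / ((c0`! * (d - c0)`!)%:R)) *
     \sum_(s < c0.+1) \sum_(t < (d - c0).+1 | (s + t == r)%N)
        ('C(c0, s)%:R * 'C(d - c0, t)%:R * a ^+ s * c ^+ (c0 - s)
          * b ^+ t * e ^+ (d - c0 - t))).

Definition Xmat : 'M[C]_2 := \matrix_(i, l) (if i == l then 0 else - 'i).

(* Clebsch-Gordan coefficient <j1 m1; j2 m2 | J M> (Condon-Shortley, Racah
   formula); all arguments are DOUBLED (tj1 = 2 j1, ...).  Returns 0 for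
   non-admissible arguments. *)
Definition ifact (x : int) : C := ((`|x|%N)`!)%:R.
Definition half (x : int) : int := (x %/ 2)%Z.

Definition CG (tj1 tm1 tj2 tm2 tJ tM : int) : C :=
  if [&& `|tm1| <= tj1, `|tm2| <= tj2, `|tM| <= tJ,
         (2 %| tj1 + tm1)%Z, (2 %| tj2 + tm2)%Z, (2 %| tJ + tM)%Z,
         (2 %| tj1 + tj2 + tJ)%Z, `|tj1 - tj2| <= tJ, tJ <= tj1 + tj2
         & tM == tm1 + tm2]
  then
    sqrtC ((tJ + 1)%:~R * ifact (half (tJ + tj1 - tj2))
            * ifact (half (tJ - tj1 + tj2)) * ifact (half (tj1 + tj2 - tJ))
            / ifact (half (tj1 + tj2 + tJ) + 1))
    * sqrtC (ifact (half (tJ + tM)) * ifact (half (tJ - tM))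
             * ifact (half (tj1 - tm1)) * ifact (half (tj1 + tm1))
             * ifact (half (tj2 - tm2)) * ifact (half (tj2 + tm2)))
    * \sum_(k < (`|half (tj1 + tj2 - tJ)|%N).+1)
        (let k' := (k : nat)%:Z in
         let a1 := half (tj1 + tj2 - tJ) - k' in
         let a2 := half (tj1 - tm1) - k' in
         let a3 := half (tj2 + tm2) - k' in
         let a4 := half (tJ - tj2 + tm1) + k' in
         let a5 := half (tJ - tj1 - tm2) + k' in
         if [&& 0 <= a1, 0 <= a2, 0 <= a3, 0 <= a4 & 0 <= a5] then
           (-1) ^+ k / (ifact k' * ifact a1 * ifact a2 * ifact a3
                         * ifact a4 * ifact a5)
         else 0)
  else 0.

(* Spherical tensor T^k_q on H_j (d = 2j):
   T^k_q = sqrt((2k+1)/(2j+1)) sum_m C^{j m+q}_{k q, j m} |j,m+q><j,m|. *)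
Definition Tkq (d k : nat) (q : int) : 'M[C]_(d.+1) :=
  \matrix_(r, c0)
    (sqrtC ((2 * k + 1)%:R / (d.+1)%:R) *
     CG (2 * k)%:Z (2 * q) d%:Z (2 * (c0 : nat)%:Z - d%:Z)
        d%:Z (2 * (r : nat)%:Z - d%:Z)).

Definition mel (n : nat) (a : 'cV[C]_n) (T : 'M[C]_n) (b : 'cV[C]_n) : C :=
  ((map_mx Num.conj a)^T *m T *m b) ord0 ord0.

End Spin.

(* Write J for the exchange matrix |j,m> |-> |j,-m> (and also on C^2).  The
   spin representation of the antidiagonal element X is D^j(X) = (-i)^(2j) J,
   while X = -i J, so covariance reads V J = e J V with e = i (-i)^(2j);
   applying it twice and using V^+ V = 1 gives e^2 = 1.  Hence each codeword is
   e J times the other one.  On the operator side, Racah's formula, reindexed by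
   t |-> k - q - t, shows J T^T J = (-1)^(q+k) T for T = T^k_q.  For real kets
   <a|T|b> = a^T T b, and substituting a = e J a', b = e J b' turns it into
   (-1)^(q+k) b'^T T a'. *)

From Pilot Require Import Defs.
From mathcomp Require Import all_boot all_order all_algebra.
From mathcomp Require Import zify ring.
Set Implicit Arguments.
Unset Strict Implicit.
Unset Printing Implicit Defensive.
Import Order.TTheory GRing.Theory Num.Theory.
Local Open Scope ring_scope.

Section ReflectSum.
Variable R : nmodType.

Lemma sum_ord_window (h : int -> R) (n m e : nat) :
  (forall t, h t != 0 -> 0 <= t <= n%:Z) ->
  \sum_(i < m + (n.+1 + e)) h (i%:Z - m%:Z) = \sum_(i < n.+1) h i%:Z.
Proof.
move=> supp; have vanish t : ~~ (0 <= t <= n%:Z) -> h t = 0.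
  by move=> out; apply/eqP; apply: contraNT out; apply: supp.
rewrite big_split_ord /= big1 ?add0r => [|i _]; last first.
  by apply: vanish => /=; have := ltn_ord i; lia.
rewrite big_split_ord /= [X in _ + X]big1 ?addr0 => [|i _]; last first.
  by apply: vanish => /=; lia.
by apply: eq_bigr => i _ /=; congr h; lia.
Qed.

Lemma sum_ord_reflect (f : int -> R) (n c : nat) :
  (forall t, f t != 0 -> (0 <= t <= n%:Z) && (0 <= c%:Z - t <= n%:Z)) ->
  \sum_(i < n.+1) f (c%:Z - i%:Z) = \sum_(i < n.+1) f i%:Z.
Proof.
move=> supp.
have supp_f t : f t != 0 -> 0 <= t <= n%:Z by move/supp; lia.
have supp_g t : f (c%:Z - t) != 0 -> 0 <= t <= n%:Z by move/supp; lia.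
rewrite -(@sum_ord_window _ n n c supp_g) -(@sum_ord_window _ n n c supp_f).
rewrite (reindex_inj rev_ord_inj); apply: eq_bigr => i _ /=; congr f.
by have := ltn_ord i; lia.
Qed.

End ReflectSum.

Section ClebschGordan.
Variable C : numClosedFieldType.

Lemma CG_eq0 (tj1 tm1 tj2 tm2 tJ tM : int) :
  tM != tm1 + tm2 -> CG C tj1 tm1 tj2 tm2 tJ tM = 0.
Proof. by move=> /negbTE neq; rewrite /CG neq !andbF. Qed.

(* The t-th summand of Racah's formula for <k q; j m | j m+q>, where d = 2j
   and x = j + m. *)
Definition racah_term (k d : nat) (q x t : int) : C :=
  if [&& 0 <= t, 0 <= k%:Z - t, 0 <= k%:Z - q - t, 0 <= x - t, 0 <= q + t
       & 0 <= d%:Z - k%:Z - x + t]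
  then (-1) ^ t / (ifact C t * ifact C (k%:Z - t) * ifact C (k%:Z - q - t)
                   * ifact C (x - t) * ifact C (q + t)
                   * ifact C (d%:Z - k%:Z - x + t))
  else 0.

Lemma CG_tensorE (k d : nat) (q x : int) :
  CG C (2 * k)%:Z (2 * q) d%:Z (2 * x - d%:Z) d%:Z (2 * (x + q) - d%:Z) =
  if [&& `|q| <= k%:Z, (k <= d)%N, 0 <= x <= d%:Z & 0 <= x + q <= d%:Z] then
    sqrtC ((d%:Z + 1)%:~R * ifact C k%:Z * ifact C (d%:Z - k%:Z) * ifact C k%:Z
           / ifact C (k%:Z + d%:Z + 1))
    * sqrtC (ifact C (x + q) * ifact C (d%:Z - x - q) * ifact C (k%:Z - q)
             * ifact C (k%:Z + q) * ifact C (d%:Z - x) * ifact C x)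
    * \sum_(t < k.+1) racah_term k d q x t%:Z
  else 0.
Proof.
rewrite /CG.
case: ifPn => [raw|/negP raw]; case: ifPn => [simp|/negP simp] //;
  try by exfalso; lia.
have -> : absz (Defs.half ((2 * k)%:Z + d%:Z - d%:Z)) = k.
  by rewrite /Defs.half; lia.
congr (sqrtC (_ * _ * _ * _ / _) * sqrtC (_ * _ * _ * _ * _ * _) * _).
all: try by congr ifact; rewrite /Defs.half; lia.
apply: eq_bigr => t _ /=; have := ltn_ord t.
rewrite /racah_term /Defs.half => t_le_k.
case: ifPn => [c1|/negP c1]; case: ifPn => [c2|/negP c2] //;
  try by exfalso; lia.
by congr (_ / (_ * _ * _ * _ * _ * _)); congr ifact; lia.
Qed.

Lemma sign_double (a : int) : (-1 : C) ^ (2 * a) = 1.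
Proof. by rewrite -exprz_exp -exprnP sqrrN expr1n exp1rz. Qed.

Lemma signB (a b : int) : (-1 : C) ^ (a - b) = (-1) ^ a * (-1) ^ b.
Proof.
rewrite (_ : a - b = a + b + 2 * (- b)); last by ring.
by rewrite !exprzDr ?unitrN1 // sign_double mulr1.
Qed.

Lemma racah_term_reflect (k d : nat) (q x t : int) :
  racah_term k d q (d%:Z - x - q) t
  = (-1) ^ (q + k%:Z) * racah_term k d q x (k%:Z - q - t).
Proof.
rewrite /racah_term.
case: ifPn => [c1|/negP c1]; case: ifPn => [c2|/negP c2];
  rewrite ?mulr0 //; try by exfalso; lia.
have sign : (-1) ^ (q + k%:Z) * (-1) ^ (k%:Z - q - t) = (-1) ^ t :> C.
  rewrite -exprzDr ?unitrN1 //.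
  have -> : q + k%:Z + (k%:Z - q - t) = 2 * k%:Z - t by ring.
  by rewrite signB sign_double mul1r.
rewrite mulrA sign.
have -> : k%:Z - (k%:Z - q - t) = q + t by ring.
have -> : k%:Z - q - (k%:Z - q - t) = t by ring.
have -> : x - (k%:Z - q - t) = d%:Z - k%:Z - (d%:Z - x - q) + t by ring.
have -> : q + (k%:Z - q - t) = k%:Z - t by ring.
have -> : d%:Z - k%:Z - x + (k%:Z - q - t) = d%:Z - x - q - t by ring.
by congr (_ / _); ring.
Qed.

Lemma racah_sum_reflect (k d : nat) (q x : int) : q <= k%:Z ->
  \sum_(t < k.+1) racah_term k d q (d%:Z - x - q) t%:Z
  = (-1) ^ (q + k%:Z) * \sum_(t < k.+1) racah_term k d q x t%:Z.
Proof.
move=> q_le_k; have c_eq : (absz (k%:Z - q))%:Z = k%:Z - q by lia.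
under eq_bigr => t _ do rewrite racah_term_reflect -c_eq.
rewrite -mulr_sumr sum_ord_reflect // => t.
rewrite c_eq /racah_term; case: ifPn => [cond _|_]; [lia | by rewrite eqxx].
Qed.

Lemma CG_tensor_reflect (k d : nat) (q x y : int) :
  CG C (2 * k)%:Z (2 * q) d%:Z (2 * (d%:Z - y) - d%:Z)
       d%:Z (2 * (d%:Z - x) - d%:Z)
  = (-1) ^ (q + k%:Z)
    * CG C (2 * k)%:Z (2 * q) d%:Z (2 * x - d%:Z) d%:Z (2 * y - d%:Z).
Proof.
have [->|y_neq] := eqVneq y (x + q); last first.
  by rewrite !CG_eq0 ?mulr0 //; apply: contra y_neq => /eqP; lia.
have -> : d%:Z - x = (d%:Z - x - q) + q by ring.
rewrite (_ : d%:Z - (x + q) = d%:Z - x - q); last by ring.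
rewrite !CG_tensorE.
case: ifPn => [c1|/negP c1]; case: ifPn => [c2|/negP c2];
  rewrite ?mulr0 //; try by exfalso; lia.
rewrite racah_sum_reflect; last by lia.
have -> : d%:Z - x - q + q = d%:Z - x by ring.
have -> : d%:Z - (d%:Z - x - q) - q = x by ring.
have -> : d%:Z - (d%:Z - x - q) = x + q by ring.
by rewrite mulrCA; congr (_ * (_ * sqrtC _ * _)); ring.
Qed.

End ClebschGordan.

Definition exch_mx {R : pzSemiRingType} {n} : 'M[R]_n :=
  \matrix_(i, j) (i == rev_ord j)%:R.

Section ExchangeMatrix.
Variable R : pzSemiRingType.

Lemma mul_exch_mx m n (A : 'M[R]_(m, n)) i j :
  (exch_mx *m A) i j = A (rev_ord i) j.
Proof.
rewrite mxE (bigD1 (rev_ord i)) //= mxE rev_ordK eqxx mul1r.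
rewrite big1 ?addr0 // => l ne.
rewrite mxE (_ : (i == rev_ord l) = false) ?mul0r //.
by apply: contraNF ne => /eqP ->; rewrite rev_ordK.
Qed.

Lemma mul_mx_exch m n (A : 'M[R]_(m, n)) i j :
  (A *m exch_mx) i j = A i (rev_ord j).
Proof.
rewrite mxE (bigD1 (rev_ord j)) //= mxE eqxx mulr1 big1 ?addr0 // => l ne.
by rewrite mxE (negbTE ne) mulr0.
Qed.

Lemma exch_mxK n : exch_mx *m exch_mx = 1%:M :> 'M[R]_n.
Proof.
by apply/matrixP => i j; rewrite mul_exch_mx !mxE (inj_eq rev_ord_inj).
Qed.

Lemma tr_exch_mx n : exch_mx^T = exch_mx :> 'M[R]_n.
Proof.
by apply/matrixP => i j; rewrite !mxE eq_sym (can2_eq rev_ordK rev_ordK).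
Qed.

Lemma intertwine_exch_col m n (V : 'M[R]_(n, m)) (e : R) (j : 'I_m) :
  V *m exch_mx = e *: (exch_mx *m V) ->
  col (rev_ord j) V = e *: (exch_mx *m col j V).
Proof.
move=> VJ; apply/matrixP => i l.
rewrite [LHS]mxE -mul_mx_exch VJ.
by rewrite [LHS]mxE [RHS]mxE !mul_exch_mx mxE.
Qed.

End ExchangeMatrix.

Section Intertwining.
Variable R : comPzRingType.

Definition bform n (T : 'M[R]_n) (a b : 'cV[R]_n) : R := (a^T *m T *m b) 0 0.

Lemma bform_tr n (T : 'M[R]_n) a b : bform T a b = bform T^T b a.
Proof.
have tr11 (M : 'M[R]_1) : M 0 0 = M^T 0 0 by rewrite mxE.
by rewrite /bform tr11 !trmx_mul trmxK mulmxA.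
Qed.

Lemma bform_twist n (J T : 'M[R]_n) (s e : R) (a b a' b' : 'cV_n) :
  e * e = 1 -> J^T *m T *m J = s *: T^T ->
  a = e *: (J *m a') -> b = e *: (J *m b') ->
  bform T a b = s * bform T b' a'.
Proof.
move=> e2 JTJ -> ->.
rewrite [bform T b' a']bform_tr /bform -scalemxAr linearZ /=.
rewrite -!scalemxAl scalerA e2 scale1r trmx_mul !mulmxA.
have -> : a'^T *m J^T *m T *m J = a'^T *m (J^T *m T *m J) by rewrite !mulmxA.
by rewrite JTJ -scalemxAr -scalemxAl mxE.
Qed.

Lemma intertwine_exch_sqr m n (W : 'M[R]_(m.+1, n)) (V : 'M[R]_(n, m.+1))
    (e : R) :
  W *m V = 1%:M -> V *m exch_mx = e *: (exch_mx *m V) -> e * e = 1.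
Proof.
move=> WV VJ.
have VE : V = (e * e) *: V.
  rewrite -[V in LHS]mulmx1 -exch_mxK mulmxA VJ -scalemxAl -mulmxA VJ.
  by rewrite -scalemxAr scalerA mulmxA exch_mxK mul1mx.
have := WV; rewrite {1}VE -scalemxAr WV => /matrixP/(_ 0 0).
by rewrite !mxE eqxx mulr1n mulr1.
Qed.

End Intertwining.

Section Spin.
Variable C : numClosedFieldType.

Lemma Dj_antidiag d (g : 'M[C]_2) :
  g ord0 ord0 = 0 -> g ord_max ord_max = 0 ->
  Dj d g = \matrix_(r, c) ((r == rev_ord c)%:R
                           * g ord0 ord_max ^+ (d - c) * g ord_max ord0 ^+ c).
Proof.
move=> g00 g11; apply/matrixP => r c; rewrite !mxE g00 g11.
have lt_c := ltn_ord c.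
rewrite big_ord_recl /= [X in _ + X]big1 ?addr0; last first.
  by move=> s _; apply: big1 => t _; rewrite expr0n /= !(mulr0, mul0r).
rewrite big_mkcond (bigD1 ord_max) //= big1 ?addr0 => [|t ne_t]; last first.
  case: ifP => // _; rewrite (expr0n _ (d - c - t)).
  have := ltn_ord t; move: ne_t; rewrite -val_eqE /= => ne_t lt_t.
  by rewrite (_ : (d - c - t == 0)%N = false) ?mulr0 //; lia.
rewrite add0n subnn bin0 binn subn0 !expr0 !mul1r !mulr1.
have -> : ((d - c)%N == r) = (r == rev_ord c).
  by rewrite -val_eqE /= subSS eq_sym.
case: eqP => [-> /=|_]; last by rewrite mulr0 !mul0r.
rewrite subSS (_ : d - (d - c) = c)%N; last by lia.
rewrite mulnC divff ?pnatr_eq0 -?lt0n ?muln_gt0 ?fact_gt0 //.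
by rewrite sqrtC1 !mul1r mulrC.
Qed.

Lemma Dj_Xmat d : Dj d (Xmat C) = (- 'i) ^+ d *: exch_mx.
Proof.
rewrite Dj_antidiag ?mxE //; apply/matrixP => r c; rewrite !mxE.
by rewrite -mulrA -exprD subnK 1?mulrC // -ltnS.
Qed.

Lemma Xmat_exch : Xmat C = - 'i *: exch_mx.
Proof.
apply/matrixP => i l; rewrite !mxE.
by case: i l => [[|[|i]] ?] // [[|[|l]] ?] //=; rewrite ?mulr0 ?mulr1.
Qed.

Lemma Xcovariant_intertwine d (V : 'M[C]_(d.+1, 2)) :
  Dj d (Xmat C) *m V = V *m Xmat C ->
  V *m exch_mx = ('i * (- 'i) ^+ d) *: (exch_mx *m V).
Proof.
rewrite Dj_Xmat Xmat_exch -scalemxAl -scalemxAr => cov.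
by rewrite -scalerA cov scalerA mulrN mulCii opprK scale1r.
Qed.

Lemma Tkq_rev d k q (i j : 'I_d.+1) :
  Tkq C d k q (rev_ord i) (rev_ord j) = (-1) ^ (q + k%:Z) * Tkq C d k q j i.
Proof.
have rev_int (l : 'I_d.+1) : (rev_ord l : nat)%:Z = d%:Z - (l : nat)%:Z.
  by have := ltn_ord l; rewrite /= subSS; lia.
by rewrite !mxE !rev_int CG_tensor_reflect mulrCA.
Qed.

Lemma Tkq_persym d k q :
  exch_mx^T *m Tkq C d k q *m exch_mx = (-1) ^ (q + k%:Z) *: (Tkq C d k q)^T.
Proof.
apply/matrixP => i j.
by rewrite tr_exch_mx mul_mx_exch mul_exch_mx Tkq_rev !mxE.
Qed.

Lemma mel_bform n (a b : 'cV[C]_n) (T : 'M[C]_n) :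
  (forall i, a i 0 \is Num.real) -> mel a T b = bform T a b.
Proof.
move=> a_real; rewrite /mel /bform (_ : map_mx Num.conj a = a) //.
by apply/matrixP => i j; rewrite mxE ord1 conj_Creal.
Qed.

End Spin.

Theorem lemmaS6 (C : numClosedFieldType) (d : nat) (V : 'M[C]_(d.+1, 2))
  (Hiso : (map_mx Num.conj V)^T *m V = 1%:M)
  (Hcov : Dj d (Xmat C) *m V = V *m Xmat C)
  (Hreal : forall (i : 'I_d.+1) (l : 'I_2), V i l \is Num.real) :
  forall (k : nat) (q : int), (k <= d)%N -> `|q| <= k%:Z ->
    let T := Tkq C d k q in
    let c0 := col ord0 V in
    let c1 := col ord_max V in
    [/\ mel c0 T c0 = (-1) ^ (q + k%:Z) * mel c1 T c1,
        mel c0 T c1 = (-1) ^ (q + k%:Z) * mel c0 T c1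
      & mel c1 T c0 = (-1) ^ (q + k%:Z) * mel c1 T c0].
Proof.
(* The persymmetry of [T] holds for every [k] and [q]: the bounds are unused. *)
move=> k q _ _ T c0 c1.
pose e : C := 'i * (- 'i) ^+ d.
have VJ : V *m exch_mx = e *: (exch_mx *m V) := Xcovariant_intertwine Hcov.
have e2 : e * e = 1 := intertwine_exch_sqr Hiso VJ.
have c0E : c0 = e *: (exch_mx *m c1).
  by rewrite -(intertwine_exch_col ord_max VJ); congr col; apply: val_inj.
have c1E : c1 = e *: (exch_mx *m c0).
  by rewrite -(intertwine_exch_col ord0 VJ); congr col; apply: val_inj.
have TJ := Tkq_persym C d k q.
have real0 i : c0 i 0 \is Num.real by rewrite mxE.
have real1 i : c1 i 0 \is Num.real by rewrite mxE.
by rewrite !mel_bform //; split; apply: bform_twist e2 TJ _ _.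
Qed.
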